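(* Let $N$ be a positive integer, $l\in\{2,\ldots,\frac{N}{2}\}$, and let $\Gamma$ be the $l$-hypercycle on $N$ vertices. Then the eigenvalues of its (signless) normalized Laplacian are $$\lambda_i=1+\frac{\sum_{r=1}^N m(r)\cos\left(\frac{2\pi i r}{N}\right)}{l},\qquad i=1,\ldots,N,$$ where $m:\{0,\ldots,N\}\to\mathbb{Z}$ is defined by $m(r):=l-r$ for $r\in\{1,\ldots,l-1\}$, $m(N-k):=l-k$ for $k\in\{1,\ldots,l-1\}$, and $m:=0$ otherwise.
   Context: A hypergraph $\Gamma=(\mathcal{V},\mathcal{H})$ has a finite vertex set $\mathcal{V}$ and a set $\mathcal{H}$ of nonempty subsets of $\mathcal{V}$ (hyperedges). $\deg(v)$ is the number of hyperedges containing $v$, $D$ the diagonal degree matrix, $A$ the matrix with $A_{ii}=0$ and $A_{ij}=-\#\{h\in\mathcal{H}: v_i,v_j\in h\}$ for $i\ne j$, and the (signless) normalized Laplacian is $L=\mathrm{Id}-D^{-1}A$. The $l$-hypercycle on $N$ vertices has $\mathcal{V}=\{v_1,\ldots,v_N\}$ and $\mathcal{H}=\{h_1,\ldots,h_N\}$ with $h_i=\{v_i,v_{i+1},\ldots,v_{i+l-1}\}$, indices taken modulo $N$ (i.e. $v_{N+i}:=v_i$). Here the eigenvalues $\lambda_i$ are indexed by the formula, not in increasing order. *)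

From HB Require Import structures.
From mathcomp Require Import all_boot all_order all_algebra.
From mathcomp Require Import all_classical all_reals all_analysis.
Set Implicit Arguments. Unset Strict Implicit. Unset Printing Implicit Defensive.
Import Order.TTheory GRing.Theory Num.Theory.
Local Open Scope ring_scope.

Section Hypergraph.
Variables (R : realType) (V : finType) (H : {set {set V}}).

Definition hdeg (v : V) : nat := #|[set h in H | v \in h]|.

Definition hadj : 'M[R]_#|V| :=
  \matrix_(i, j) (if i == j then 0
                  else - (#|[set h in H | (enum_val i \in h) && (enum_val j \in h)]|)%:R).

Definition hdegmx : 'M[R]_#|V| := \matrix_(i, j) ((i == j)%:R * (hdeg (enum_val i))%:R).

Definition hlap : 'M[R]_#|V| := 1%:M - invmx hdegmx *m hadj.
End Hypergraph.

(* The l-hypercycle on N vertices v_0..v_{N-1} (0-based indices mod N):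
   h_i = {v_i, v_{i+1}, ..., v_{i+l-1}} *)
Definition hyperedge (N l : nat) (i : 'I_N) : {set 'I_N} :=
  [set v : 'I_N | ((v + N - i) %% N < l)%N].

Definition hypercycle (N l : nat) : {set {set 'I_N}} :=
  [set hyperedge l i | i : 'I_N].

Definition mfun (N l r : nat) : int :=
  if (1 <= r <= l - 1)%N then (l%:Z - r%:Z)
  else if (N - (l - 1) <= r <= N - 1)%N then (l%:Z - (N - r)%:Z)
  else 0.

Definition hc_eig (R : realType) (N l i : nat) : R :=
  1 + (\sum_(1 <= r < N.+1) (mfun N l r)%:~R * cos (2 * pi * i%:R * r%:R / N%:R)) / l%:R.

From Pilot Require Import Defs.
From HB Require Import structures.
From mathcomp Require Import all_boot all_order all_algebra.
From mathcomp Require Import all_classical all_reals all_analysis.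
From mathcomp Require Import complex lra zify.
(* Re-import so that [mfun] denotes [Defs.mfun], not MathComp-Analysis's notation. *)
Import Defs.
Set Implicit Arguments. Unset Strict Implicit. Unset Printing Implicit Defensive.
Import Order.TTheory GRing.Theory Num.Theory.

(* Each vertex of the l-hypercycle lies in exactly l hyperedges, and two vertices at
   cyclic distance d lie in exactly m(d) common hyperedges, so L = Id - D^-1 A is the
   circulant matrix with first row c(d) = [d = 0] + m(d)/l.  A circulant matrix is
   diagonalized by the Fourier matrix (w^(jk))_(j,k), w = exp(2 pi i/N), an invertible
   Vandermonde matrix, with eigenvalues sum_d c(d) w^(jd); since m(d) = m(N - d) these
   are the real numbers 1 + sum_d m(d) cos(2 pi j d/N) / l.  Indexing them by
   j = 1..N instead of j = 0..N-1 is harmless because w^N = 1. *)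

Lemma big_ord_rot1 (R : Type) (idx : R) (op : Monoid.com_law idx) n (F : nat -> R) :
  F n = F 0 -> \big[op/idx]_(i < n) F i.+1 = \big[op/idx]_(i < n) F i.
Proof.
case: n => [|n] FnF0; first by rewrite !big_ord0.
by rewrite big_ord_recr FnF0 big_ord_recl Monoid.mulmC.
Qed.

Lemma big_ord_shift_periodic (R : Type) (idx : R) (op : Monoid.com_law idx) n k
    (F : nat -> R) :
  (forall m, F (m + n) = F m) -> \big[op/idx]_(i < n) F (i + k) = \big[op/idx]_(i < n) F i.
Proof.
move=> F_per; elim: k => [|k IHk]; first by under eq_bigr do rewrite addn0.
under eq_bigr do rewrite addnS -addSn.
by rewrite (big_ord_rot1 op (F := fun i => F (i + k))) // add0n addnC F_per.
Qed.

Lemma big_ord_reflect (R : Type) (idx : R) (op : Monoid.com_law idx) n (F : nat -> R) :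
  \big[op/idx]_(i < n) F ((n - i) %% n) = \big[op/idx]_(i < n) F i.
Proof.
rewrite -(big_ord_rot1 op (F := fun i => F ((n - i) %% n))); last first.
  by rewrite subnn mod0n subn0 modnn.
rewrite [RHS](reindex_inj rev_ord_inj); apply: eq_bigr => i _ /=.
by rewrite modn_small //; have := ltn_ord i; lia.
Qed.

Lemma card_ord_range n lo hi : hi <= n -> #|[set t : 'I_n | lo <= t < hi]| = hi - lo.
Proof.
move=> hi_n; rewrite -sum1dep_card -(big_mkord (fun t => lo <= t < hi) (fun=> 1%N)).
rewrite big_mkcond /=; suff -> : forall m,
    \sum_(0 <= i < m) (if lo <= i < hi then 1 else 0) = minn hi m - minn lo m by lia.
elim=> [|m IHm]; first by rewrite big_geq //; lia.
by rewrite big_nat_recr //= IHm; case: ifP; lia.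
Qed.

Lemma modn_cases N x : 0 < N ->
  (x < N /\ x %% N = x) \/ (N <= x < 2 * N /\ x %% N = x - N) \/ 2 * N <= x.
Proof.
move=> N_gt0; case: (ltnP x N) => [x_lt_N | N_le_x]; first by left; rewrite modn_small.
case: (ltnP x (2 * N)) => [x_lt_2N | ]; last by right; right.
right; left; split; first by apply/andP.
by rewrite -{1}(subnK N_le_x) modnDr modn_small //; lia.
Qed.

(* Rewrites each innermost [x %% N] to [x] or [x - N]; the bounds giving [x < 2 * N]
   must be in the context, since the remaining case is closed by [lia]. *)
Ltac case_modn N_gt0 :=
  repeat match goal with
  | |- context[(?x %% _)%N] =>
      lazymatch x with context[(_ %% _)%N] => fail | _ =>
        have [[? ->]|[[? ->]|?]] := modn_cases x N_gt0; [| | exfalso; lia] end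
  end.

Section CyclicOffset.
Variable N : nat.
Hypothesis N_gt0 : 0 < N.

Definition cyc_offset (v i : 'I_N) : 'I_N := Ordinal (ltn_pmod (v + N - i) N_gt0).

Lemma cyc_offsetK v : involutive (cyc_offset v).
Proof.
move=> i; apply: val_inj => /=.
move: (ltn_ord i) (ltn_ord v) => *.
by case_modn N_gt0; lia.
Qed.

Lemma card_cyc_offset v (P : pred 'I_N) :
  #|[set i | P (cyc_offset v i)]| = #|[set t | P t]|.
Proof.
rewrite -[RHS](card_preimset _ (inv_inj (cyc_offsetK v))).
by apply: eq_card => i; rewrite !inE.
Qed.

Lemma cyc_offset_shift u v i :
  cyc_offset v i = (cyc_offset u i + (v + N - u) %% N) %% N :> nat.
Proof.
move: (ltn_ord i) (ltn_ord u) (ltn_ord v) => /= *.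
by case_modn N_gt0; lia.
Qed.

End CyclicOffset.

Section HypercycleIncidence.
Variables (N l : nat).
Hypotheses (l_gt0 : 0 < l) (l_le_half : 2 * l <= N).

Let N_gt0 : 0 < N. Proof. by lia. Qed.

Lemma mem_hyperedge v i : (v \in hyperedge l i) = (cyc_offset N_gt0 v i < l).
Proof. by rewrite inE. Qed.

Lemma hyperedge_inj : injective (@hyperedge N l).
Proof.
move=> i j eq_ij; apply: val_inj => /=.
have self (k : 'I_N) : k \in hyperedge l k by rewrite inE addKn modnn.
have := self i; rewrite eq_ij inE => i_in_j.
have := self j; rewrite -eq_ij inE => j_in_i.
move: (ltn_ord i) (ltn_ord j) => *.
by move: i_in_j j_in_i; case_modn N_gt0; lia.
Qed.

Lemma card_hypercycle_edges (P : pred {set 'I_N}) :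
  #|[set h in hypercycle N l | P h]| = #|[set i | P (hyperedge l i)]|.
Proof.
have -> : [set h in hypercycle N l | P h] = hyperedge l @: [set i | P (hyperedge l i)].
  apply/setP => h; rewrite !inE; apply/andP/imsetP.
    by case=> /imsetP[i _ ->] Ph; exists i; rewrite ?inE.
  by case=> i; rewrite inE => Pi ->; split => //; apply/imsetP; exists i.
exact/card_imset/hyperedge_inj.
Qed.

Lemma hdeg_hypercycle v : hdeg (hypercycle N l) v = l.
Proof.
rewrite /hdeg card_hypercycle_edges.
under eq_finset do rewrite mem_hyperedge.
rewrite (card_cyc_offset N_gt0 v (fun t => t < l)).
by rewrite (card_ord_range 0) //; lia.
Qed.

Lemma card_overlap d : 0 < d < N ->
  Posz #|[set t : 'I_N | (t < l) && ((t + d) %% N < l)]| = mfun N l d.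
Proof.
move=> /andP[d_gt0 d_lt_N].
have overlapE lo hi : hi <= N ->
    (forall t, t < N -> (t < l) && ((t + d) %% N < l) = (lo <= t < hi)) ->
  #|[set t : 'I_N | (t < l) && ((t + d) %% N < l)]| = hi - lo.
  move=> hi_le_N E; rewrite -(card_ord_range lo hi_le_N).
  by apply: eq_card => t; rewrite !inE E.
rewrite /mfun; case: ifP => [d_small | d_not_small]; [|case: ifP => [d_large | d_mid]].
- rewrite (overlapE 0 (l - d)); [lia | lia | move=> t t_lt_N].
  by case_modn N_gt0; apply/idP/idP; lia.
- rewrite (overlapE (N - d) l); [lia | lia | move=> t t_lt_N].
  by case_modn N_gt0; apply/idP/idP; lia.
- rewrite (overlapE 0 0); [lia | lia | move=> t t_lt_N].
  by case_modn N_gt0; apply/idP/idP; lia.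
Qed.

Lemma card_common_hyperedges u v : u != v ->
  Posz #|[set h in hypercycle N l | (u \in h) && (v \in h)]| = mfun N l ((v + N - u) %% N).
Proof.
move=> u_neq_v; rewrite card_hypercycle_edges.
under eq_finset do rewrite !mem_hyperedge (cyc_offset_shift N_gt0 u v).
rewrite (card_cyc_offset N_gt0 u (fun t => (t < l) && ((t + (v + N - u) %% N) %% N < l))).
apply: card_overlap; move: u_neq_v (ltn_ord u) (ltn_ord v); rewrite -val_eqE /= => *.
by case_modn N_gt0; lia.
Qed.

End HypercycleIncidence.

Local Open Scope ring_scope.

Lemma char_poly_eigenbasis (F : fieldType) n (A V : 'M[F]_n) (mu : 'rV[F]_n) :
  \det V != 0 -> A *m V = V *m diag_mx mu -> char_poly A = \prod_i ('X - (mu 0 i)%:P).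
Proof.
move=> detV_neq0 AV.
have : char_poly_mx A *m map_mx polyC V = map_mx polyC V *m char_poly_mx (diag_mx mu).
  by rewrite /char_poly_mx mulmxBl mulmxBr -map_mxM AV map_mxM mul_scalar_mx mul_mx_scalar.
move=> /(congr1 determinant); rewrite !det_mulmx det_map_mx [RHS]mulrC.
rewrite /char_poly => /mulIf -> //; last by rewrite polyC_eq0.
rewrite -/(char_poly _) char_poly_trig ?diag_mx_is_trig //.
by apply: eq_bigr => i _; rewrite mxE eqxx mulr1n.
Qed.

Definition circulant_mx (R : Type) n (c : nat -> R) : 'M[R]_n :=
  \matrix_(i, j) c ((j + n - i) %% n)%N.

Lemma map_circulant_mx (R S : Type) (f : R -> S) n (c : nat -> R) :
  map_mx f (circulant_mx n c) = circulant_mx n (f \o c).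
Proof. by apply/matrixP => i j; rewrite !mxE. Qed.

Section Circulant.
Variables (F : fieldType) (n : nat) (w : F).
Hypothesis w_prim : n.-primitive_root w.

Definition fourier_mx : 'M[F]_n := Vandermonde n (\row_(j < n) w ^+ j).

Definition circulant_eig (c : nat -> F) (j : nat) : F := \sum_(d < n) c d * w ^+ (j * d).

Lemma det_fourier_mx_neq0 : \det fourier_mx != 0.
Proof.
rewrite det_Vandermonde; apply/prodf_neq0 => i _; apply/prodf_neq0 => j lt_ij.
by rewrite !mxE subr_eq0 (eq_prim_root_expr w_prim) !modn_small // gtn_eqF.
Qed.

Lemma circulant_eig_periodic c j : circulant_eig c (j + n) = circulant_eig c j.
Proof.
apply: eq_bigr => d _.
by rewrite mulnDl exprD -(prim_expr_mod w_prim (n * d)) modnMr expr0 mulr1.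
Qed.

Lemma circulant_fourier c :
  circulant_mx n c *m fourier_mx = fourier_mx *m diag_mx (\row_j circulant_eig c j).
Proof.
apply/matrixP => k j; rewrite mul_mx_diag !mxE.
under eq_bigr do rewrite !mxE -exprM.
have k_lt_n := ltn_ord k.
rewrite -(big_ord_shift_periodic _ k
  (F := fun m => c ((m + n - k) %% n)%N * w ^+ (j * m))) => [|m]; last first.
  have -> : (m + n + n - k = (m + n - k) + n)%N by lia.
  by rewrite modnDr mulnDr exprD -(prim_expr_mod w_prim (j * n)) modnMl expr0 mulr1.
rewrite /circulant_eig mulr_sumr; apply: eq_bigr => d _.
have -> : (d + k + n - k = d + n)%N by lia.
by rewrite modnDr modn_small // mulnDr exprD [w ^+ (j * k)]exprM mulrA mulrC.
Qed.

Lemma char_poly_circulant c :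
  char_poly (circulant_mx n c) = \prod_(j < n) ('X - (circulant_eig c j)%:P).
Proof.
rewrite (char_poly_eigenbasis det_fourier_mx_neq0 (circulant_fourier c)).
by under eq_bigr do rewrite mxE.
Qed.

End Circulant.

Local Open Scope complex_scope.

Section Expi.
Variable R : realType.

Definition expi (x : R) : R[i] := cos x +i* sin x.

Lemma expi0 : expi 0 = 1.
Proof. by rewrite /expi cos0 sin0. Qed.

Lemma expiD x y : expi (x + y) = expi x * expi y.
Proof. by apply/eqP; rewrite eq_complex /= cosD sinD eqxx [X in _ == X]addrC eqxx. Qed.

Lemma expiMn x k : expi x ^+ k = expi (x *+ k).
Proof. by elim: k => [|k IHk]; rewrite ?expi0 // exprS IHk -expiD -mulrS. Qed.

Lemma expi_inv x y : expi x * expi y = 1 -> expi x = expi (- y).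
Proof.
move=> xy1; have yNy1 : expi y * expi (- y) = 1 by rewrite -expiD subrr expi0.
by rewrite -[LHS]mulr1 -yNy1 mulrA xy1 mul1r.
Qed.

Lemma expiDN x : expi x + expi (- x) = (cos x *+ 2)%:C.
Proof. by apply/eqP; rewrite eq_complex /= cosN sinN subrr mulr2n !eqxx. Qed.

Lemma cos_lt1 (x : R) : 0 < x < pi *+ 2 -> cos x < 1.
Proof.
move=> /andP[x_gt0 x_lt2pi].
have sin_gt0 : 0 < sin (x / 2).
  apply: sin_gt0_pi; apply/andP; split; first by rewrite divr_gt0.
  by rewrite ltr_pdivrMr // mulr_natr.
have -> : x = (x / 2) *+ 2 by rewrite -mulr_natr divfK.
rewrite cos_mulr2n cos2sin2.
have : 0 < sin (x / 2) ^+ 2 by rewrite exprn_gt0.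
lra.
Qed.

Lemma expi_2pi_div_expr N k : expi (2 * pi / N%:R) ^+ k = expi (2 * pi * k%:R / N%:R).
Proof. by rewrite expiMn -(mulr_natr (2 * pi / N%:R)) mulrAC. Qed.

Lemma expi_prim_root N : (0 < N)%N -> N.-primitive_root (expi (2 * pi / N%:R)).
Proof.
move=> N_gt0; apply/andP; split => //; apply/forallP => i.
rewrite unity_rootE expi_2pi_div_expr.
have N_gt0R : 0 < N%:R :> R by rewrite ltr0n.
have [-> | ne_iN] := eqVneq i.+1 N.
  by rewrite mulfK ?pnatr_eq0 -?lt0n // /expi mulr_natl cos2pi sin2pi !eqxx.
apply/eqP/negbTE/eqP => -[cos_eq1 _]; move: cos_eq1; apply/eqP; rewrite lt_eqF // cos_lt1 //.
have i_lt_N : (i.+1 < N)%N by have := ltn_ord i; lia.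
rewrite divr_gt0 ?mulr_gt0 ?pi_gt0 ?ltr0n //= ltr_pdivrMr // -(mulr_natl pi 2).
by rewrite ltr_pM2l ?mulr_gt0 ?pi_gt0 // ltr_nat.
Qed.

Lemma dft_even N (a : nat -> R) (j : nat) : (0 < N)%N ->
    (forall d, (d < N)%N -> a ((N - d) %% N)%N = a d) ->
  \sum_(d < N) (a d)%:C * expi (2 * pi / N%:R) ^+ (j * d)%N
  = (\sum_(d < N) a d * cos (2 * pi * j%:R * d%:R / N%:R))%:C.
Proof.
move=> N_gt0 a_even; set w := expi _.
have w_prim : N.-primitive_root w := expi_prim_root N_gt0.
have w_jd (d : nat) : w ^+ (j * d)%N = expi (2 * pi * j%:R * d%:R / N%:R).
  by rewrite expi_2pi_div_expr natrM mulrA.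
have w_refl (d : 'I_N) : w ^+ (j * ((N - d) %% N))%N = expi (- (2 * pi * j%:R * d%:R / N%:R)).
  rewrite expi_2pi_div_expr; apply: expi_inv.
  rewrite -expi_2pi_div_expr -w_jd -exprD -mulnDr -(prim_expr_mod w_prim) -modnMmr.
  by rewrite modnDml subnK ?modnn ?muln0 ?mod0n ?expr0 // ltnW.
(* Pair the term d with the term N - d, whose root of unity is the conjugate one. *)
apply: (@pmulrnI _ 2) => //.
rewrite mulr2n -{1}(big_ord_reflect _ _ (fun d => (a d)%:C * w ^+ (j * d)%N)).
rewrite -big_split -rmorphMn -sumrMnl rmorph_sum; apply: eq_bigr => d _ /=.
by rewrite a_even // w_refl w_jd -mulrDr addrC expiDN -mulrnAr rmorphM.
Qed.

End Expi.

Section HypercycleLaplacian.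
Variables (N l : nat).
Hypotheses (l_gt0 : (0 < l)%N) (l_le_half : (2 * l <= N)%N).

Let N_gt0 : (0 < N)%N. Proof. by lia. Qed.

Lemma mfun0 : mfun N l 0 = 0.
Proof. by rewrite /mfun; repeat case: ifP => ?; lia. Qed.

Lemma mfunN : mfun N l N = 0.
Proof. by rewrite /mfun; repeat case: ifP => ?; lia. Qed.

Lemma mfun_reflect d : (d < N)%N -> mfun N l ((N - d) %% N) = mfun N l d.
Proof. by move=> d_lt_N; rewrite /mfun; case_modn N_gt0; repeat case: ifP => ?; lia. Qed.

Definition hc_lap_coef (R : fieldType) (d : nat) : R :=
  (d == 0)%:R + (mfun N l d)%:~R / l%:R.

Lemma hlap_hypercycle (R : realType) :
  hlap R (hypercycle N l) = circulant_mx #|'I_N| (hc_lap_coef R).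
Proof.
have hdegE : hdegmx R (hypercycle N l) = (l%:R)%:M.
  by apply/matrixP => i j; rewrite !mxE hdeg_hypercycle // mulr_natl.
apply/matrixP => k m; rewrite /hlap hdegE invmx_scalar mul_scalar_mx !mxE /hc_lap_coef.
have offsetE : ((m + #|'I_N| - k) %% #|'I_N| = (enum_val m + N - enum_val k) %% N)%N.
  by rewrite !enum_val_ord /=; move: (nat_of_ord m) (nat_of_ord k) => x y; rewrite card_ord.
have [<- | k_neq_m] := eqVneq k m.
  by rewrite addKn modnn mfun0 /= mulr0 subr0 mul0r addr0.
have d_neq0 : ((m + #|'I_N| - k) %% #|'I_N| == 0)%N = false.
  rewrite offsetE; move: k_neq_m (ltn_ord (enum_val k)) (ltn_ord (enum_val m)).
  rewrite -(inj_eq enum_val_inj) -val_eqE /= => *.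
  by case_modn N_gt0; lia.
rewrite d_neq0 offsetE -card_common_hyperedges ?(inj_eq enum_val_inj) //.
by rewrite !mulr0n sub0r add0r mulrN opprK pmulrn mulrC.
Qed.

Lemma hypercycle_circulant_eig (R : realType) j :
  circulant_eig N (expi (2 * pi / N%:R)) (real_complex R \o hc_lap_coef R) j
  = (hc_eig R N l j)%:C.
Proof.
rewrite /circulant_eig /hc_eig; under eq_bigr do rewrite /= /hc_lap_coef rmorphD mulrDl.
rewrite big_split rmorphD /=; congr (_ + _).
  rewrite (bigD1 (Ordinal N_gt0)) //= muln0 expr0 mulr1 big1 ?addr0 // => d.
  by rewrite -val_eqE /= => /negbTE ->; rewrite mul0r.
rewrite (dft_even (a := fun d => (mfun N l d)%:~R / l%:R)) // => [|d d_lt_N]; last first.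
  by rewrite mfun_reflect.
congr (_%:C); rewrite mulr_suml big_add1 big_mkord.
rewrite (big_ord_rot1 _
  (F := fun r => (mfun N l r)%:~R * cos (2 * pi * j%:R * r%:R / N%:R) / l%:R)).
  by apply: eq_bigr => d _; rewrite mulrAC.
by rewrite mfunN mfun0 !mul0r.
Qed.

End HypercycleLaplacian.

Theorem mainTheorem10 (R : realType) (N l : nat) :
  (0 < N)%N -> (2 <= l)%N -> (2 * l <= N)%N ->
  char_poly (hlap R (hypercycle N l)) =
  \prod_(i < N) ('X - (hc_eig R N l i.+1)%:P).
Proof.
move=> N_gt0 l_ge2 l_le_half; have l_gt0 : (0 < l)%N := ltnW l_ge2.
pose w := expi (2 * pi / N%:R : R).
have w_prim : N.-primitive_root w := expi_prim_root R N_gt0.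
have w_prim_card : #|'I_N|.-primitive_root w by rewrite card_ord.
pose c := real_complex R \o hc_lap_coef N l R.
apply: (@map_poly_inj _ _ (real_complex R)).
rewrite map_char_poly hlap_hypercycle // map_circulant_mx (char_poly_circulant w_prim_card).
rewrite card_ord rmorph_prod.
rewrite -(big_ord_rot1 _ (F := fun j => 'X - (circulant_eig N w c j)%:P)).
  by apply: eq_bigr => j _; rewrite /= map_polyXsubC hypercycle_circulant_eig.
by rewrite -[N in LHS]add0n circulant_eig_periodic.
Qed.
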